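(* Let $A$ and $B$ be real symmetric $n\times n$ matrices. Let $\lambda_1$ be the eigenvalue of $A$ of largest absolute value, assumed to have multiplicity one, and let $\lambda_2$ be an eigenvalue of $A$ of second-largest absolute value. Let $\mu_1$ be an eigenvalue of $B$ of largest absolute value (so $\|A\|=|\lambda_1|$, $\|B\|=|\mu_1|$). Suppose $\kappa\in[0,1)$ satisfies $|\lambda_2|\le \kappa|\lambda_1|$, let $\eta=\|A-B\|$, and assume $|\mu_1|-\eta\ge \kappa|\lambda_1|$. Let $v(A)$ and $v(B)$ be unit eigenvectors of $A$ and $B$ associated with $\lambda_1$ and $\mu_1$ respectively, with signs chosen so that $v(A)\cdot v(B)\ge 0$. Then $$\|v(A)-v(B)\|^2\le 2\left(1-\frac{1}{|\lambda_1|}\sqrt{\frac{(|\mu_1|-\eta)^2-\lambda_1^2\kappa^2}{1-\kappa^2}}\right).$$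
   Context: $\|\cdot\|$ denotes the Euclidean norm on vectors and the associated spectral norm on matrices. *)

From HB Require Import structures.
From mathcomp Require Import all_boot all_order all_algebra.
From mathcomp Require Import classical_sets reals.
Set Implicit Arguments. Unset Strict Implicit. Unset Printing Implicit Defensive.
Import Order.TTheory GRing.Theory Num.Theory.
Local Open Scope ring_scope.
Local Open Scope classical_set_scope.

(* Vectors of R^n are represented as row vectors 'rV[R]_n, matching the
   row-vector convention of mathcomp's mxalgebra (eigenvalue/eigenspace). *)

Definition vdot (R : realType) (n : nat) (u v : 'rV[R]_n) : R := (u *m v^T) 0 0.
Definition vnorm (R : realType) (n : nat) (u : 'rV[R]_n) : R := Num.sqrt (vdot u u).

Definition spec_norm (R : realType) (n : nat) (M : 'M[R]_n) : R :=
  sup [set vnorm (x *m M) | x in [set x : 'rV[R]_n | vnorm x = 1]].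

From HB Require Import structures.
From mathcomp Require Import all_boot all_order all_algebra.
From mathcomp Require Import classical_sets reals.
From mathcomp Require Import complex sesquilinear spectral.
From mathcomp Require Import ring lra.
Set Implicit Arguments. Unset Strict Implicit. Unset Printing Implicit Defensive.
Import Order.TTheory GRing.Theory Num.Theory.
Local Open Scope ring_scope.
Local Open Scope sesquilinear_scope.

(* Let c = vA . vB.  The proof squeezes |vB A|^2 between two bounds:
   - upper bound: write vB = c vA + w with w orthogonal to vA.  Since the
     eigenvalue lambda1 is simple, w is orthogonal to the whole
     lambda1-eigenspace, so the spectral theorem for the (complexified)
     symmetric matrix A gives |w A| <= |lambda2| |w|; hence
     |vB A|^2 <= c^2 lambda1^2 + lambda2^2 (1 - c^2);
   - lower bound: vB A = mu1 vB + vB (A - B) with |vB (A - B)| <= ||A - B||,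
     so |vB A| >= |mu1| - ||A - B||.
   Comparing the two bounds yields a lower bound on c, and the theorem
   follows from |vA - vB|^2 = 2 (1 - c). *)

Section InnerProduct.
Variables (R : realType) (n : nat).
Implicit Types (u v w : 'rV[R]_n) (M : 'M[R]_n).

Lemma vdotE u v : vdot u v = \sum_k u 0 k * v 0 k.
Proof. by rewrite /vdot mxE; apply: eq_bigr => k _; rewrite mxE. Qed.

Lemma vdotC u v : vdot u v = vdot v u.
Proof. by rewrite !vdotE; apply: eq_bigr => k _; rewrite mulrC. Qed.

Lemma vdotDl u v w : vdot (u + v) w = vdot u w + vdot v w.
Proof. by rewrite /vdot mulmxDl mxE. Qed.

Lemma vdotZl a u v : vdot (a *: u) v = a * vdot u v.
Proof. by rewrite /vdot -scalemxAl mxE. Qed.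

Lemma vdotBl u v w : vdot (u - v) w = vdot u w - vdot v w.
Proof. by rewrite vdotDl -scaleN1r vdotZl mulN1r. Qed.

Lemma vdotDr u v w : vdot u (v + w) = vdot u v + vdot u w.
Proof. by rewrite vdotC vdotDl !(vdotC _ u). Qed.

Lemma vdotZr a u v : vdot u (a *: v) = a * vdot u v.
Proof. by rewrite vdotC vdotZl vdotC. Qed.

Lemma vdotBr u v w : vdot u (v - w) = vdot u v - vdot u w.
Proof. by rewrite vdotC vdotBl !(vdotC _ u). Qed.

Lemma vdot_mulmx u v M : vdot (u *m M) v = vdot u (v *m M^T).
Proof. by rewrite /vdot trmx_mul trmxK mulmxA. Qed.

Lemma vdot_ge0 u : 0 <= vdot u u.
Proof. by rewrite vdotE sumr_ge0 // => k _; rewrite -expr2 sqr_ge0. Qed.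

Lemma vnorm_sq u : vnorm u ^+ 2 = vdot u u.
Proof. by rewrite /vnorm sqr_sqrtr // vdot_ge0. Qed.

Lemma vdot_unit u : vnorm u = 1 -> vdot u u = 1.
Proof. by move=> u1; rewrite -vnorm_sq u1 expr1n. Qed.

(* Cauchy-Schwarz against a unit vector: expand |e - (u.e) u|^2 >= 0. *)
Lemma cauchy_schwarz_unit u e : vdot u u = 1 -> vdot u e ^+ 2 <= vdot e e.
Proof.
move=> uu; have := vdot_ge0 (e - vdot u e *: u).
rewrite !(vdotBl, vdotBr, vdotZl, vdotZr) uu (vdotC e u) -subr_ge0.
by move=> h; nra.
Qed.

Lemma vnorm_perturb_ge u e (mu : R) : vdot u u = 1 -> 0 <= `|mu| - vnorm e ->
  (`|mu| - vnorm e) ^+ 2 <= vdot (mu *: u + e) (mu *: u + e).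
Proof.
move=> uu gap; set s := vdot u e; set p := vnorm e.
have expand : vdot (mu *: u + e) (mu *: u + e) = mu ^+ 2 + 2 * mu * s + p ^+ 2.
  rewrite vnorm_sq !(vdotDl, vdotDr, vdotZl, vdotZr) uu (vdotC e u) -/s; ring.
have p0 : 0 <= p by exact: sqrtr_ge0.
have s_le : `|s| <= p.
  rewrite -(ler_pXn2r (_ : (0 < 2)%N)) ?nnegrE ?normr_ge0 // real_normK ?num_real //.
  by rewrite vnorm_sq; exact: cauchy_schwarz_unit.
have mus : - (`|mu| * p) <= mu * s.
  rewrite lerNl; apply: le_trans (ler_norm _) _.
  by rewrite normrN normrM ler_wpM2l.
rewrite expand -[mu ^+ 2]real_normK ?num_real //; lra.
Qed.

(* Crude bound showing that the set defining [spec_norm M] is bounded. *)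
Lemma vnorm_mulmx_bound M x : vnorm x = 1 ->
  vnorm (x *m M) <= Num.sqrt (\sum_j (\sum_i `|M i j|) ^+ 2).
Proof.
move=> x1; rewrite /vnorm ler_sqrt; last first.
  by rewrite sumr_ge0 // => j _; rewrite sqr_ge0.
have coord_le1 i : `|x 0 i| <= 1.
  rewrite -(ler_pXn2r (_ : (0 < 2)%N)) ?nnegrE ?normr_ge0 // expr1n.
  rewrite real_normK ?num_real // -(vdot_unit x1) vdotE (bigD1 i) //= -expr2.
  by rewrite lerDl sumr_ge0 // => k _; rewrite -expr2 sqr_ge0.
rewrite vdotE; apply: ler_sum => j _; rewrite -expr2.
rewrite -[_ ^+ 2]real_normK ?num_real //.
rewrite ler_pXn2r ?nnegrE ?normr_ge0 ?sumr_ge0 //.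
rewrite mxE; apply: le_trans (ler_norm_sum _ _ _) _; apply: ler_sum => i _.
by rewrite normrM -[X in _ <= X]mul1r ler_wpM2r.
Qed.

Lemma spec_norm_ge M x : vnorm x = 1 -> vnorm (x *m M) <= spec_norm M.
Proof.
move=> x1; apply: ub_le_sup; last by exists x.
exists (Num.sqrt (\sum_j (\sum_i `|M i j|) ^+ 2)) => _ [y y1 <-].
exact: vnorm_mulmx_bound.
Qed.

End InnerProduct.

(* Spectral estimates for a real symmetric matrix A, obtained from the
   unitary diagonalization A = P^* diag(d) P of its complexification. *)
Section SpectralGap.
Variables (R : realType) (n : nat) (A : 'M[R]_n).
Hypothesis symA : A^T = A.

Local Notation C := R[i].
Local Notation fc := (real_complex R).
Local Notation Ac := (map_mx fc A).
Local Notation P := (spectralmx Ac).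
Local Notation d := (spectral_diag Ac).

Lemma conjT_real m p (M : 'M[R]_(m, p)) : (map_mx fc M)^t* = map_mx fc M^T.
Proof. by apply/matrixP => i j; rewrite !mxE; exact: conjc_real. Qed.

Lemma dotc_map (u v : 'rV[R]_n) :
  (map_mx fc u *m (map_mx fc v)^t* ) 0 0 = fc (vdot u v).
Proof. by rewrite conjT_real -map_mxM mxE. Qed.

Lemma dotcE (y : 'rV[C]_n) : (y *m y^t* ) 0 0 = \sum_j y 0 j * (y 0 j)^*.
Proof. by rewrite mxE; apply: eq_bigr => j _; rewrite !mxE. Qed.

Lemma Ac_hermitian : Ac \is hermsymmx.
Proof.
apply/is_hermitianmxP; rewrite expr0 scale1r.
by rewrite conjT_real symA.
Qed.

Lemma spectral_mulmxV : P *m P^t* = 1%:M.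
Proof. by apply/unitarymxP/spectral_unitarymx. Qed.

Lemma spectral_mulVmx : P^t* *m P = 1%:M.
Proof.
by rewrite -invmx_unitary ?spectral_unitarymx // mulVmx // spectral_unit.
Qed.

Lemma Ac_spectral : Ac = P^t* *m diag_mx d *m P.
Proof.
have /orthomx_spectralP {1}-> := hermitian_normalmx Ac_hermitian.
by rewrite invmx_unitary // spectral_unitarymx.
Qed.

Lemma spectral_row_eigen j : row j P *m Ac = d 0 j *: row j P.
Proof.
rewrite -row_mul {2}Ac_spectral !mulmxA spectral_mulmxV mul1mx.
by rewrite row_mul row_diag_mx -scalemxAl -rowE.
Qed.

Lemma spectral_diag_realE j : exists r, d 0 j = fc r.
Proof.
apply/complex_realP; move/mxOverP: (hermitian_spectral_diag_real Ac_hermitian).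
exact.
Qed.

Lemma dotc_spectral (y : 'rV[C]_n) : (y *m P) *m (y *m P)^t* = y *m y^t*.
Proof. by rewrite trmx_mul map_mxM mulmxA -[y *m P *m _]mulmxA spectral_mulmxV mulmx1. Qed.

Lemma ortho_complex_eigen r (w : 'rV[R]_n) (y : 'rV[C]_n) :
  (forall x, x *m A = r *: x -> vdot w x = 0) ->
  y *m Ac = fc r *: y -> (map_mx fc w *m y^t* ) 0 0 = 0.
Proof.
move=> orth yE; set E := eigenspace A r.
have wE : w *m E^T = 0.
  apply/rowP => i; have := orth (row i E) (eigenspaceP (row_sub i E)).
  rewrite vdotE !mxE => h; rewrite -[in RHS]h.
  by apply: eq_bigr => k _; rewrite !mxE.
have : (y <= map_mx fc E)%MS by rewrite map_eigenspace; apply/eigenspaceP.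
case/submxP => a ->.
by rewrite trmx_mul map_mxM conjT_real mulmxA -map_mxM wE map_mx0 mul0mx mxE.
Qed.

Lemma spectral_gap_bound (b : R) (w : 'rV[R]_n) :
  (forall r, b < `|r| -> forall x, x *m A = r *: x -> vdot w x = 0) ->
  vdot (w *m A) (w *m A) <= b ^+ 2 * vdot w w.
Proof.
move=> orth; pose z := map_mx fc w *m P^t*.
have wE : map_mx fc w = z *m P by rewrite -mulmxA spectral_mulVmx mulmx1.
have wAE : map_mx fc (w *m A) = (z *m diag_mx d) *m P.
  by rewrite map_mxM [in LHS]Ac_spectral !mulmxA.
suff : fc (vdot (w *m A) (w *m A)) <= fc (b ^+ 2) * fc (vdot w w) by rewrite -rmorphM lecR.
rewrite -!dotc_map wAE wE !dotc_spectral !dotcE mulr_sumr.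
apply: ler_sum => j _; rewrite mul_mx_diag mxE.
have [r dr] := spectral_diag_realE j.
have [zj0|zjn0] := eqVneq (z 0 j) 0; first by rewrite zj0 !(mul0r, mulr0, rmorph0).
have rb : `|r| <= b.
  rewrite leNgt; apply: contra zjn0 => br; apply/eqP.
  have -> : z 0 j = (map_mx fc w *m (row j P)^t* ) 0 0.
    by rewrite !mxE; apply: eq_bigr => k _; rewrite !mxE.
  have := @ortho_complex_eigen r w (row j P) (orth r br).
  by rewrite spectral_row_eigen dr; apply.
rewrite dr.
have -> : (z 0 j * fc r)^* = (z 0 j)^* * fc r.
  by rewrite rmorphM; congr (_ * _); exact: conjc_real.
have -> : z 0 j * fc r * ((z 0 j)^* * fc r) = fc (r ^+ 2) * (z 0 j * (z 0 j)^*).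
  by rewrite rmorphXn; ring.
rewrite ler_wpM2r ?mul_conjC_ge0 // lecR -[r ^+ 2]real_normK ?num_real //.
by rewrite ler_pXn2r ?nnegrE ?normr_ge0 // (le_trans _ rb).
Qed.

End SpectralGap.

Lemma rank1_eigenspace_colinear (F : fieldType) n (A : 'M[F]_n) l
    (u x : 'rV[F]_n) :
  \rank (eigenspace A l) = 1%N -> u != 0 -> u *m A = l *: u ->
  x *m A = l *: x -> exists a, x = a *: u.
Proof.
move=> rk1 u0 /eigenspaceP uE /eigenspaceP xE.
have Esub : (eigenspace A l <= u)%MS.
  by have := (mxrank_leqif_sup uE).2; rewrite rk1 rank_rV u0 eqxx.
exact/sub_rVP/(submx_trans xE Esub).
Qed.

Lemma simple_eigen_gap (R : realType) n (A : 'M[R]_n) (l1 l2 : R)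
    (u w : 'rV[R]_n) :
  A^T = A -> \rank (eigenspace A l1) = 1%N -> u != 0 -> u *m A = l1 *: u ->
  (forall l, eigenvalue A l -> l != l1 -> `|l| <= `|l2|) ->
  vdot w u = 0 -> vdot (w *m A) (w *m A) <= l2 ^+ 2 * vdot w w.
Proof.
move=> symA rk1 u0 uE gap wu; rewrite -[l2 ^+ 2]real_normK ?num_real //.
apply: spectral_gap_bound => // r l2r x xE.
have [->|x0] := eqVneq x 0; first by rewrite vdotE big1 // => k _; rewrite mxE mulr0.
have evr : eigenvalue A r by apply/eigenvalueP; exists x.
have [rl1|rl1] := eqVneq r l1; last by have := gap r evr rl1; rewrite leNgt l2r.
rewrite rl1 in xE; have [a ->] := rank1_eigenspace_colinear rk1 u0 uE xE.
by rewrite vdotZr wu mulr0.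
Qed.

Section Perturbation.
Variables (R : realType) (n : nat).
Implicit Types (A B : 'M[R]_n) (u v : 'rV[R]_n).

(* Upper bound: writing v = c u + w with w orthogonal to the top eigenvector
   u, only the component w is damped, by the second eigenvalue. *)
Lemma image_norm_upper A (l1 l2 : R) u v :
  A^T = A -> \rank (eigenspace A l1) = 1%N ->
  (forall l, eigenvalue A l -> l != l1 -> `|l| <= `|l2|) ->
  vdot u u = 1 -> u *m A = l1 *: u -> vdot v v = 1 ->
  vdot (v *m A) (v *m A) <=
    vdot u v ^+ 2 * l1 ^+ 2 + l2 ^+ 2 * (1 - vdot u v ^+ 2).
Proof.
move=> symA rk1 gap uu uE vv; set c := vdot u v; set w := v - c *: u.
have u0 : u != 0 by apply: contra_eq_neq uu => ->; rewrite vdotE big1 => [|k _];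
  rewrite ?mxE ?mul0r // eq_sym oner_eq0.
have wu : vdot w u = 0 by rewrite vdotBl vdotZl uu (vdotC v) mulr1 subrr.
have ww : vdot w w = 1 - c ^+ 2.
  by rewrite /w !(vdotBl, vdotBr, vdotZl, vdotZr) uu vv (vdotC v) -/c; ring.
have vAE : v *m A = (c * l1) *: u + w *m A.
  by rewrite -[v in LHS](subrK (c *: u)) mulmxDl -scalemxAl uE scalerA addrC.
have cross : vdot u (w *m A) = 0.
  by rewrite vdotC vdot_mulmx symA uE vdotZr wu mulr0.
rewrite vAE !(vdotDl, vdotDr, vdotZl, vdotZr) uu cross (vdotC (w *m A)) cross.
rewrite -ww; have := simple_eigen_gap symA rk1 u0 uE gap wu; lra.
Qed.

Lemma image_norm_lower A B (mu : R) v :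
  vnorm v = 1 -> v *m B = mu *: v -> 0 <= `|mu| - spec_norm (A - B) ->
  (`|mu| - spec_norm (A - B)) ^+ 2 <= vdot (v *m A) (v *m A).
Proof.
move=> v1 vE gap; set e := v *m (A - B).
have vAE : v *m A = mu *: v + e by rewrite /e mulmxBr vE addrC subrK.
have pe := spec_norm_ge (A - B) v1.
have p0 : 0 <= vnorm e by exact: sqrtr_ge0.
have gap_e : 0 <= `|mu| - vnorm e by lra.
rewrite vAE; apply: le_trans (vnorm_perturb_ge (vdot_unit v1) gap_e).
by rewrite ler_pXn2r ?nnegrE //; lra.
Qed.

Lemma vdot_sub_unit u v : vdot u u = 1 -> vdot v v = 1 ->
  vdot (u - v) (u - v) = 2 * (1 - vdot u v).
Proof. by move=> uu vv; rewrite !(vdotBl, vdotBr) uu vv (vdotC v); ring. Qed.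

End Perturbation.

(* The scalar inequality closing the argument: the two bounds on |v A|^2
   force the cosine c to be large. *)
Lemma cosine_lower_bound (R : realType) (c l1 l2 m k : R) :
  0 <= c -> c ^+ 2 <= 1 -> 0 <= k -> k < 1 -> `|l2| <= k * `|l1| ->
  m ^+ 2 <= c ^+ 2 * l1 ^+ 2 + l2 ^+ 2 * (1 - c ^+ 2) ->
  `|l1|^-1 * Num.sqrt ((m ^+ 2 - l1 ^+ 2 * k ^+ 2) / (1 - k ^+ 2)) <= c.
Proof.
move=> c0 c1 k0 k1 l2k hm.
have [->|l1n0] := eqVneq l1 0; first by rewrite normr0 invr0 mul0r.
have L0 : 0 < `|l1| by rewrite normr_gt0.
have K0 : 0 < 1 - k ^+ 2 by nra.
have l1E : l1 ^+ 2 = `|l1| ^+ 2 by rewrite real_normK ?num_real.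
have l2E : l2 ^+ 2 <= k ^+ 2 * l1 ^+ 2.
  rewrite l1E -[l2 ^+ 2]real_normK ?num_real // -exprMn.
  by rewrite ler_pXn2r ?nnegrE ?mulr_ge0.
have damp : 0 <= (k ^+ 2 * l1 ^+ 2 - l2 ^+ 2) * (1 - c ^+ 2).
  by rewrite mulr_ge0 // subr_ge0.
rewrite ler_pdivrMl // -[_ * c]ger0_norm ?mulr_ge0 // -sqrtr_sqr.
rewrite ler_sqrt ?sqr_ge0 // ler_pdivrMr // exprMn -l1E; lra.
Qed.

Theorem mainTheorem1 (R : realType) (n : nat) (A B : 'M[R]_n)
  (lambda1 lambda2 mu1 kappa : R) (vA vB : 'rV[R]_n) :
  A^T = A -> B^T = B ->
  eigenvalue A lambda1 ->
  (forall l, eigenvalue A l -> `|l| <= `|lambda1|) ->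
  \rank (eigenspace A lambda1) = 1%N ->
  eigenvalue A lambda2 -> lambda2 != lambda1 ->
  (forall l, eigenvalue A l -> l != lambda1 -> `|l| <= `|lambda2|) ->
  eigenvalue B mu1 ->
  (forall l, eigenvalue B l -> `|l| <= `|mu1|) ->
  0 <= kappa -> kappa < 1 ->
  `|lambda2| <= kappa * `|lambda1| ->
  kappa * `|lambda1| <= `|mu1| - spec_norm (A - B) ->
  vnorm vA = 1 -> vA *m A = lambda1 *: vA ->
  vnorm vB = 1 -> vB *m B = mu1 *: vB ->
  0 <= vdot vA vB ->
  vnorm (vA - vB) ^+ 2 <=
    2 * (1 - `|lambda1|^-1 *
      Num.sqrt (((`|mu1| - spec_norm (A - B)) ^+ 2 - lambda1 ^+ 2 * kappa ^+ 2)
                / (1 - kappa ^+ 2))).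
Proof.
move=> symA _ _ _ rk1 _ _ gap2 _ _ k0 k1 l2k hm vA1 vAE vB1 vBE c0.
have uA := vdot_unit vA1; have uB := vdot_unit vB1.
have gapB : 0 <= `|mu1| - spec_norm (A - B).
  by apply: le_trans hm; rewrite mulr_ge0.
have c1 : vdot vA vB ^+ 2 <= 1 by rewrite -uB; exact: cauchy_schwarz_unit.
have bounds := le_trans (image_norm_lower vB1 vBE gapB)
  (image_norm_upper symA rk1 gap2 uA vAE uB).
have := cosine_lower_bound c0 c1 k0 k1 l2k bounds.
rewrite vnorm_sq vdot_sub_unit //; lra.
Qed.
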